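(* For every base $\mathcal{B}$, atomic multisets $L$ and $K$, and atom $p$: $L\Vdash^K_{\mathcal{B}}p$ if and only if $L,K\vdash_{\mathcal{B}}p$.
   Context: Fix a set $\mathbb{A}$ of propositional atoms. ILL formulae: $\phi ::= p\in\mathbb{A} \mid \top \mid 0 \mid 1 \mid \phi\multimap\phi \mid \phi\otimes\phi \mid \phi\,\&\,\phi \mid \phi\oplus\phi \mid\ !\phi$. All multisets are finite; ''$\Gamma,\Delta$'' denotes multiset union. Atomic rules and bases: an atomic sequent is $P\Rightarrow p$ with $P$ a multiset of atoms, $p$ an atom. An atomic box is a multiset of atomic sequents. An atomic rule is a triple $\langle\mathbf{A},\mathbf{S},p\rangle$ with $\mathbf{A}$ a multiset of atomic boxes, $\mathbf{S}$ an atomic box, $p$ an atom. A base is a set of atomic rules. An atom $p$ is persistent in $\mathcal{B}$ if some $\langle\varnothing,\mathbf{S},p\rangle\in\mathcal{B}$ has $\mathbf{S}\neq\varnothing$. Derivability $\vdash_{\mathcal{B}}$: (Ref) $p\vdash_{\mathcal{B}}p$; (App) if $\langle\mathbf{A},\mathbf{S},p\rangle\in\mathcal{B}$ with $\mathbf{A}=\{\mathbf{T}_1,\dots,\mathbf{T}_m\}$, and there are atomic multisets $C_1,\dots,C_n$ ($n\ge m$) and a multiset $D=\{d_{m+1},\dots,d_n\}$ of atoms persistent in $\mathcal{B}$ such that $C_i,Q\vdash_{\mathcal{B}}q$ for every $i\le m$ and every $Q\Rightarrow q\in\mathbf{T}_i$, $C_j\vdash_{\mathcal{B}}d_j$ for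 every $m<j\le n$, and $D,U\vdash_{\mathcal{B}}v$ for every $U\Rightarrow v\in\mathbf{S}$, then $C_1,\dots,C_n\vdash_{\mathcal{B}}p$. Support $\Vdash^L_{\mathcal{B}}$ (base $\mathcal{B}$, atomic multiset $L$), by induction on formulae: $\Vdash^L_{\mathcal{B}}p$ iff $L\vdash_{\mathcal{B}}p$; $\Vdash^L_{\mathcal{B}}\varphi\multimap\psi$ iff $\varphi\Vdash^L_{\mathcal{B}}\psi$; $\Vdash^L_{\mathcal{B}}\varphi\otimes\psi$ iff for all $\mathcal{C}\supseteq\mathcal{B}$, atomic $K$, atoms $p$: if $\varphi,\psi\Vdash^K_{\mathcal{C}}p$ then $\Vdash^{L,K}_{\mathcal{C}}p$; $\Vdash^L_{\mathcal{B}}1$ iff for all $\mathcal{C}\supseteq\mathcal{B}$, $K$, $p$: if $\Vdash^K_{\mathcal{C}}p$ then $\Vdash^{L,K}_{\mathcal{C}}p$; $\Vdash^L_{\mathcal{B}}\varphi\&\psi$ iff $\Vdash^L_{\mathcal{B}}\varphi$ and $\Vdash^L_{\mathcal{B}}\psi$; $\Vdash^L_{\mathcal{B}}\varphi\oplus\psi$ iff for all $\mathcal{C}\supseteq\mathcal{B}$, $K$, $p$: if $\varphi\Vdash^K_{\mathcal{C}}p$ and $\psi\Vdash^K_{\mathcal{C}}p$ then $\Vdash^{L,K}_{\mathcal{C}}p$; $\Vdash^L_{\mathcal{B}}0$ iff $\Vdash^{L,K}_{\mathcal{B}}p$ for all atoms $p$ and atomic $K$; $\Vdash^L_{\mathcal{B}}\top$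 always; $\Vdash^L_{\mathcal{B}}!\varphi$ iff for all $\mathcal{C}\supseteq\mathcal{B}$, $K$, $p$: if (for all $\mathcal{D}\supseteq\mathcal{C}$, $\Vdash^{\varnothing}_{\mathcal{D}}\varphi$ implies $\Vdash^K_{\mathcal{D}}p$) then $\Vdash^{L,K}_{\mathcal{C}}p$. For nonempty multisets: $\Vdash^L_{\mathcal{B}}\Gamma,\Delta$ iff $L=K,M$ with $\Vdash^K_{\mathcal{B}}\Gamma$ and $\Vdash^M_{\mathcal{B}}\Delta$. For a nonempty antecedent written $!\Delta,\Theta$, where $!\Delta$ collects the formulae with top-level connective $!$ (with $\Delta$ the formulae under those $!$) and $\Theta$ contains none: $!\Delta,\Theta\Vdash^L_{\mathcal{B}}\varphi$ iff for all $\mathcal{C}\supseteq\mathcal{B}$ and atomic $K$, if $\Vdash^{\varnothing}_{\mathcal{C}}\delta$ for every $\delta\in\Delta$ and $\Vdash^K_{\mathcal{C}}\Theta$ then $\Vdash^{L,K}_{\mathcal{C}}\varphi$ (when $\Theta$ is empty, $K$ is empty). An empty antecedent: $\varnothing\Vdash^L_{\mathcal{B}}\varphi$ means $\Vdash^L_{\mathcal{B}}\varphi$. An atomic multiset $L$ used as an antecedent is regarded as a multiset of atomic formulae. *)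

From Stdlib Require Import List Permutation.
Import ListNotations.
Set Implicit Arguments.

Section BeS.
Variable A : Type.

(* Finite multisets are represented by lists, considered up to Permutation;
   multiset union is list concatenation. *)
Definition atomic_seq := (list A * A)%type.
Definition box := list atomic_seq.
Definition rule := (list box * box * A)%type.
Definition base := rule -> Prop.

Definition ext (B C : base) : Prop := forall r, B r -> C r.

Definition persistent (B : base) (p : A) : Prop :=
  exists S : box, S <> [] /\ B ([], S, p).

(* In (App), the
   list [Cs] holds C_1..C_m (paired with T_1..T_m), and [Es] holds the pairs
   (C_j, d_j) for m < j <= n; D is the multiset of the d_j. *)
Inductive deriv (B : base) : list A -> A -> Prop :=
| d_ref : forall L p, Permutation L [p] -> deriv B L p
| d_app : forall (As : list box) (S : box) (p : A)
            (Cs : list (list A)) (Es : list (list A * A)) (L : list A),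
    B (As, S, p) ->
    Forall2 (fun (T : box) (C : list A) =>
               forall Q q, In (Q, q) T -> deriv B (C ++ Q) q) As Cs ->
    (forall C d, In (C, d) Es -> persistent B d /\ deriv B C d) ->
    (forall U v, In (U, v) S -> deriv B (map snd Es ++ U) v) ->
    Permutation L (concat Cs ++ concat (map fst Es)) ->
    deriv B L p.

Inductive formula : Type :=
| FAtom : A -> formula
| FTop : formula
| FZero : formula
| FOne : formula
| FImp : formula -> formula -> formula
| FTensor : formula -> formula -> formula
| FWith : formula -> formula -> formula
| FPlus : formula -> formula -> formula
| FBang : formula -> formula.

(* An antecedent item: either a !δ (represented by the predicate
   C |-> ⊩^∅_C δ) or a non-! formula θ (represented by (C,K) |-> ⊩^K_C θ). *)
Definition item := ((base -> Prop) + (base -> list A -> Prop))%type.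

(* ⊩^K_C Θ for a multiset Θ of non-! formulas; empty Θ forces K empty. *)
Fixpoint msupp (C : base) (K : list A) (Th : list (base -> list A -> Prop))
  : Prop :=
  match Th with
  | [] => K = []
  | [s] => s C K
  | s :: Th' => exists K1 K2, Permutation K (K1 ++ K2) /\ s C K1 /\ msupp C K2 Th'
  end.

Definition bangs (G : list item) : list (base -> Prop) :=
  flat_map (fun i => match i with inl b => [b] | inr _ => [] end) G.
Definition nonbangs (G : list item) : list (base -> list A -> Prop) :=
  flat_map (fun i => match i with inl _ => [] | inr s => [s] end) G.

(* !Δ,Θ ⊩^L_B goal  for a nonempty antecedent. *)
Definition ante (B : base) (L : list A) (G : list item)
  (goal : base -> list A -> Prop) : Prop :=
  forall C, ext B C -> forall K,
    (forall b, In b (bangs G) -> b C) ->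
    msupp C K (nonbangs G) ->
    goal C (L ++ K).

Fixpoint supp (phi : formula) (B : base) (L : list A) {struct phi} : Prop :=
  match phi with
  | FAtom p => deriv B L p
  | FTop => True
  | FZero => forall p K, deriv B (L ++ K) p
  | FOne => forall C, ext B C -> forall K p, deriv C K p -> deriv C (L ++ K) p
  | FImp f g =>
      ante B L
        [match f with FBang h => inl (fun C => supp h C []) | _ => inr (supp f) end]
        (supp g)
  | FTensor f g =>
      forall C, ext B C -> forall K p,
        ante C K
          [match f with FBang h => inl (fun C => supp h C []) | _ => inr (supp f) end;
           match g with FBang h => inl (fun C => supp h C []) | _ => inr (supp g) end]
          (fun D M => deriv D M p) ->
        deriv C (L ++ K) p
  | FWith f g => supp f B L /\ supp g B L
  | FPlus f g =>
      forall C, ext B C -> forall K p,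
        ante C K
          [match f with FBang h => inl (fun C => supp h C []) | _ => inr (supp f) end]
          (fun D M => deriv D M p) ->
        ante C K
          [match g with FBang h => inl (fun C => supp h C []) | _ => inr (supp g) end]
          (fun D M => deriv D M p) ->
        deriv C (L ++ K) p
  | FBang f =>
      forall C, ext B C -> forall K p,
        (forall D, ext C D -> supp f D [] -> deriv D K p) ->
        deriv C (L ++ K) p
  end.

Definition item_of (phi : formula) : item :=
  match phi with FBang h => inl (fun C => supp h C []) | _ => inr (supp phi) end.

Definition ssupp (G : list formula) (B : base) (L : list A) (phi : formula) : Prop :=
  match G with
  | [] => supp phi B L
  | _ => ante B L (map item_of G) (supp phi)
  end.

End BeS.

(* (=>) Instantiate the antecedent with the base B itself and the context L, whose atoms support
   themselves by (Ref).  (<=) Derivability is monotone under base extension and admits cut: a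
   derivation of an atom a can replace an occurrence of a in an antecedent.  Cut goes by induction
   on the derivation; in an (App) step the occurrence of a lies in one of the contexts C_i, and the
   cut is pushed into the premises that use C_i. *)
From Stdlib Require Import List Permutation.
Import ListNotations.

Lemma in_concat_map_split {X Y : Type} {f : X -> list Y} {y : Y} {xs : list X} :
  In y (concat (map f xs)) ->
  exists xs1 x xs2 ys1 ys2, xs = xs1 ++ x :: xs2 /\ f x = ys1 ++ y :: ys2.
Proof.
  intros Hy.
  apply in_concat in Hy as (ys & Hys & Hy).
  apply in_map_iff in Hys as (x & <- & Hx).
  apply in_split in Hx as (xs1 & xs2 & ->).
  apply in_split in Hy as (ys1 & ys2 & Hfx).
  now exists xs1, x, xs2, ys1, ys2.
Qed.

Lemma Permutation_cut_context (X : Type) (a : X) M N l1 l2 l3 l4 :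
  Permutation (a :: M) (l1 ++ l2 ++ a :: l3 ++ l4) ->
  Permutation (N ++ M) (l1 ++ l2 ++ N ++ l3 ++ l4).
Proof.
  intros H.
  rewrite app_assoc in H |- *.
  apply Permutation_cons_app_inv in H.
  transitivity (N ++ (l1 ++ l2) ++ l3 ++ l4).
  - now apply Permutation_app_head.
  - apply Permutation_app_swap_app.
Qed.

Section StrongInduction.
Variables (A : Type) (B : base A) (P : list A -> A -> Prop).

Hypothesis P_ref : forall L p, Permutation L [p] -> P L p.
Hypothesis P_app : forall (As : list (box A)) (S : box A) (p : A)
    (Cs : list (list A)) (Es : list (list A * A)) (L : list A),
  B (As, S, p) ->
  Forall2 (fun (T : box A) (C : list A) =>
             forall Q q, In (Q, q) T -> deriv B (C ++ Q) q /\ P (C ++ Q) q) As Cs ->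
  (forall C d, In (C, d) Es -> persistent B d /\ deriv B C d /\ P C d) ->
  (forall U v, In (U, v) S -> deriv B (map snd Es ++ U) v /\ P (map snd Es ++ U) v) ->
  Permutation L (concat Cs ++ concat (map fst Es)) ->
  P L p.

(* The generated [deriv_ind] has no induction hypothesis for the box premises, which sit under
   [Forall2]; hence the nested fixpoint. *)
Fixpoint deriv_ind_strong L p (H : deriv B L p) {struct H} : P L p :=
  match H with
  | @d_ref _ _ _ _ HL => P_ref _ _ HL
  | @d_app _ _ _ _ _ _ _ _ HB HAs HEs HS HL =>
      P_app _ _ _ _ _ _ HB
        ((fix lift As Cs (F : Forall2 (fun (T : box A) (C : list A) =>
                 forall Q q, In (Q, q) T -> deriv B (C ++ Q) q) As Cs) :
            Forall2 (fun (T : box A) (C : list A) =>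
                 forall Q q, In (Q, q) T -> deriv B (C ++ Q) q /\ P (C ++ Q) q) As Cs :=
            match F with
            | Forall2_nil _ => Forall2_nil _
            | Forall2_cons T C HT F' =>
                Forall2_cons T C
                  (fun Q q HQ => conj (HT Q q HQ) (deriv_ind_strong _ _ (HT Q q HQ)))
                  (lift _ _ F')
            end) _ _ HAs)
        (fun C d HC => match HEs C d HC with
                       | conj Hd HCd => conj Hd (conj HCd (deriv_ind_strong _ _ HCd))
                       end)
        (fun U v HU => conj (HS U v HU) (deriv_ind_strong _ _ (HS U v HU)))
        HL
  end.

End StrongInduction.

Section Derivability.
Context {A : Type}.

Lemma deriv_perm {B : base A} {L L' p} : Permutation L L' -> deriv B L p -> deriv B L' p.
Proof.
  intros HLL' H; destruct H as [L p HL | As S p Cs Es L HB HAs HEs HS HL].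
  - apply d_ref. now rewrite <- HLL'.
  - apply d_app with As S Cs Es; auto. now rewrite <- HLL'.
Qed.

Lemma deriv_mono {B C : base A} {L p} : ext B C -> deriv B L p -> deriv C L p.
Proof.
  intros HBC H; revert L p H.
  apply (deriv_ind_strong _ B (fun L p => deriv C L p)).
  - intros L p HL. now apply d_ref.
  - intros As S p Cs Es L HB HAs HEs HS HL.
    apply d_app with As S Cs Es; auto.
    + exact (Forall2_impl _ (fun _ _ HT Q q HQ => proj2 (HT Q q HQ)) HAs).
    + intros C' d HC'. destruct (HEs C' d HC') as ((S' & HS' & HBS') & _ & Hd).
      split; [exists S'; auto | exact Hd].
    + intros U v HU. apply (HS U v HU).
Qed.

Definition cut_admissible (B : base A) L p : Prop :=
  forall a M N, Permutation L (a :: M) -> deriv B N a -> deriv B (N ++ M) p.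

Lemma cut_admissible_middle {B : base A} {X a Y N q} :
  cut_admissible B (X ++ a :: Y) q -> deriv B N a -> deriv B (X ++ N ++ Y) q.
Proof.
  intros Hcut Ha.
  apply (deriv_perm (Permutation_app_swap_app N X Y)).
  apply Hcut with a; [|exact Ha].
  symmetry; apply Permutation_middle.
Qed.

Section CutThroughApp.
Variables (B : base A) (As : list (box A)) (S : box A) (p : A)
  (Cs : list (list A)) (Es : list (list A * A)) (L : list A).

Hypothesis HB : B (As, S, p).
Hypothesis HAs : Forall2 (fun (T : box A) (C : list A) =>
  forall Q q, In (Q, q) T -> deriv B (C ++ Q) q /\ cut_admissible B (C ++ Q) q) As Cs.
Hypothesis HEs :
  forall C d, In (C, d) Es -> persistent B d /\ deriv B C d /\ cut_admissible B C d.
Hypothesis HS : forall U v, In (U, v) S -> deriv B (map snd Es ++ U) v.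
Hypothesis HL : Permutation L (concat Cs ++ concat (map fst Es)).

Lemma cut_in_box_context a M N :
  Permutation L (a :: M) -> deriv B N a -> In a (concat Cs) -> deriv B (N ++ M) p.
Proof.
  intros HM Ha Hin.
  rewrite <- (map_id Cs) in Hin.
  destruct (in_concat_map_split Hin) as (Cs1 & C & Cs2 & C1 & C2 & -> & HC).
  cbn in HC; subst C.
  apply Forall2_app_inv_r in HAs as (As1 & As2' & HAs1 & HAs2 & ->).
  inversion HAs2 as [| T ? As2 ? HT HAs2']; subst.
  apply d_app with (As1 ++ T :: As2) S (Cs1 ++ (C1 ++ N ++ C2) :: Cs2) Es; auto.
  - apply Forall2_app; [|constructor].
    + exact (Forall2_impl _ (fun _ _ HT' Q q HQ => proj1 (HT' Q q HQ)) HAs1).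
    + intros Q q HQ. destruct (HT Q q HQ) as [_ Hcut].
      rewrite <- app_assoc in Hcut. rewrite <- !app_assoc.
      exact (cut_admissible_middle Hcut Ha).
    + exact (Forall2_impl _ (fun _ _ HT' Q q HQ => proj1 (HT' Q q HQ)) HAs2').
  - intros C' d HC'. now destruct (HEs C' d HC') as (Hd & HC'd & _).
  - rewrite concat_app in HL |- *; cbn in HL |- *.
    rewrite <- !app_assoc in HL; rewrite <- !app_assoc.
    apply Permutation_cut_context with a. now rewrite HM in HL.
Qed.

Lemma cut_in_persistent_context a M N :
  Permutation L (a :: M) -> deriv B N a -> In a (concat (map fst Es)) -> deriv B (N ++ M) p.
Proof.
  intros HM Ha Hin.
  destruct (in_concat_map_split Hin) as (Es1 & [C d] & Es2 & C1 & C2 & -> & HC).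
  cbn in HC; subst C.
  apply d_app with As S Cs (Es1 ++ (C1 ++ N ++ C2, d) :: Es2); auto.
  - exact (Forall2_impl _ (fun _ _ HT Q q HQ => proj1 (HT Q q HQ)) HAs).
  - intros C' d' HC'.
    apply in_app_or in HC' as [HC' | [HC' | HC']].
    + now destruct (HEs C' d') as (Hd & HC'd & _); [apply in_or_app; left|].
    + injection HC' as <- <-.
      destruct (HEs (C1 ++ a :: C2) d) as (Hd & _ & Hcut); [apply in_or_app; now right; left|].
      split; [exact Hd | exact (cut_admissible_middle Hcut Ha)].
    + now destruct (HEs C' d') as (Hd & HC'd & _); [apply in_or_app; now right; right|].
  - intros U v HU. apply HS in HU. rewrite map_app in HU |- *. exact HU.
  - rewrite map_app, concat_app in HL |- *; cbn in HL |- *.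
    rewrite <- !app_assoc in HL; rewrite <- !app_assoc.
    rewrite (app_assoc (concat Cs)) in HL |- *.
    apply Permutation_cut_context with a. now rewrite HM in HL.
Qed.

End CutThroughApp.

Lemma deriv_cut_admissible {B : base A} {L p} : deriv B L p -> cut_admissible B L p.
Proof.
  revert L p; apply deriv_ind_strong.
  - intros L p HL a M N HM Ha.
    assert (E : a :: M = [p]).
    { apply Permutation_length_1_inv. now rewrite <- HL, HM. }
    injection E as -> ->. now rewrite app_nil_r.
  - intros As S p Cs Es L HB HAs HEs HS HL a M N HM Ha.
    assert (Hin : In a (concat Cs ++ concat (map fst Es))).
    { apply (Permutation_in a HL), (Permutation_in a (Permutation_sym HM)). now left. }
    assert (HS' : forall U v, In (U, v) S -> deriv B (map snd Es ++ U) v).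
    { intros U v HU. apply (HS U v HU). }
    apply in_app_or in Hin as [Hin | Hin];
      [eapply cut_in_box_context | eapply cut_in_persistent_context]; eassumption.
Qed.

Lemma deriv_cut {B : base A} {a M N p} :
  deriv B (a :: M) p -> deriv B N a -> deriv B (N ++ M) p.
Proof. intros H; now apply (deriv_cut_admissible H). Qed.

End Derivability.

Section AtomicAntecedents.
Context {A : Type}.

Definition atom_supports (L : list A) : list (base A -> list A -> Prop) :=
  map (fun a => supp (FAtom a)) L.

Lemma ante_atoms (B : base A) K L goal :
  ante B K (map (@item_of A) (map (@FAtom A) L)) goal <->
  forall C, ext B C -> forall K', msupp C K' (atom_supports L) -> goal C (K ++ K').
Proof.
  assert (Hbangs : bangs (map (@item_of A) (map (@FAtom A) L)) = []).
  { now induction L. }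
  assert (Hnonbangs : nonbangs (map (@item_of A) (map (@FAtom A) L)) = atom_supports L).
  { induction L as [|a L IH]; simpl; [reflexivity | now rewrite IH]. }
  unfold ante; rewrite Hbangs, Hnonbangs; cbn.
  split; intros H C HC K'; [intros HK | intros _ HK]; now apply H.
Qed.

Lemma msupp_cons_inv (C : base A) K s Th :
  msupp C K (s :: Th) -> exists K1 K2, Permutation K (K1 ++ K2) /\ s C K1 /\ msupp C K2 Th.
Proof.
  destruct Th as [|t Th]; cbn; [intros H | easy].
  exists K, []. now rewrite app_nil_r.
Qed.

Lemma msupp_atom_supports_refl (B : base A) L : msupp B L (atom_supports L).
Proof.
  induction L as [|a [|b L] IH]; cbn in *; auto using d_ref.
  exists [a], (b :: L). auto using d_ref.
Qed.

Lemma msupp_atom_supports_cut {C : base A} {L K M q} :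
  msupp C K (atom_supports L) -> deriv C (L ++ M) q -> deriv C (K ++ M) q.
Proof.
  revert K M; induction L as [|a L IH]; intros K M HK H.
  - cbn in HK; now subst.
  - apply msupp_cons_inv in HK as (K1 & K2 & HK & Ha & HK2).
    apply (deriv_cut H) in Ha.
    apply (deriv_perm (Permutation_app_swap_app K1 L M)), (IH K2 _ HK2) in Ha.
    apply (deriv_perm (Permutation_app_swap_app K2 K1 M)) in Ha.
    rewrite app_assoc in Ha.
    exact (deriv_perm (Permutation_app_tail M (Permutation_sym HK)) Ha).
Qed.

End AtomicAntecedents.

Theorem lemma2 (A : Type) (B : base A) (L K : list A) (p : A) :
  ssupp (map (@FAtom A) L) B K (FAtom p) <-> deriv B (L ++ K) p.
Proof.
  destruct L as [|a L']; [reflexivity|].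
  change (ante B K (map (@item_of A) (map (@FAtom A) (a :: L'))) (supp (FAtom p))
          <-> deriv B ((a :: L') ++ K) p).
  rewrite ante_atoms; split.
  - intros H.
    apply (deriv_perm (Permutation_app_comm K (a :: L'))).
    exact (H B (fun r Hr => Hr) _ (msupp_atom_supports_refl B (a :: L'))).
  - intros H C HC K' HK.
    apply (deriv_perm (Permutation_app_comm K' K)).
    apply (msupp_atom_supports_cut HK), (deriv_mono HC), H.
Qed.
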